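(* Let $\sigma>0$, $\mu\in\mathbb{R}$, $\rho(x)=\frac1{\sqrt{2\pi\sigma^2}}e^{-\frac{(x-\mu)^2}{2\sigma^2}}$ and $\alpha_n=\int_\mathbb{R}\psi_n(x)\rho(x)\,\mathrm{d}x$ for $n\in\mathbb{N}\cup\{0\}$. Let $$\lambda=\begin{cases}\frac14\log\left|\frac{\sigma^2+1}{\sigma^2-1}\right|,&\text{if }\sigma^2\neq1,\\ \frac14,&\text{if }\sigma^2=1.\end{cases}$$ If $N\in\mathbb{N}$ satisfies $$N\ge\begin{cases}\frac{32\mu^2}{|\sigma^4-1|}\left(\log\left|\frac{\sigma^2+1}{\sigma^2-1}\right|\right)^{-2},&\text{if }\sigma^2\neq1,\\ \frac{e^{3/2}\mu^2}{2},&\text{if }\sigma^2=1,\end{cases}$$ then $$\left(\sum_{n=N}^\infty\alpha_n^2\right)^{1/2}\le\frac{1}{\pi^{1/4}\sqrt{(\sigma^2+1)(1-e^{-2\lambda})}}e^{-\frac{\mu^2}{2(\sigma^2+1)}-\lambda N}.$$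
   Context: $H_n$ is the $n$-th physicist's Hermite polynomial and $\psi_n(x)=\frac{1}{\sqrt{\sqrt\pi\,2^n n!}}e^{-x^2/2}H_n(x)$ are the Hermite functions. *)

From Stdlib Require Import Reals.
From Coquelicot Require Import Coquelicot.
Open Scope R_scope.

(* physicist's Hermite polynomials: hermite_pair n x = (H_n x, H_{n+1} x),
   H_0 = 1, H_1 = 2x, H_{m+2} = 2x H_{m+1} - 2(m+1) H_m *)
Fixpoint hermite_pair (n : nat) (x : R) : R * R :=
  match n with
  | O => (1, 2 * x)
  | S m => let p := hermite_pair m x in
           (snd p, 2 * x * snd p - 2 * INR (S m) * fst p)
  end.

Definition hermite (n : nat) (x : R) : R := fst (hermite_pair n x).

Definition hermite_fun (n : nat) (x : R) : R :=
  / sqrt (sqrt PI * 2 ^ n * INR (Factorial.fact n)) * exp (- x ^ 2 / 2) * hermite n x.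

Definition gauss (sigma mu x : R) : R :=
  / sqrt (2 * PI * sigma ^ 2) * exp (- (x - mu) ^ 2 / (2 * sigma ^ 2)).

Definition alpha (sigma mu : R) (n : nat) : R :=
  RInt_gen (fun x => hermite_fun n x * gauss sigma mu x)
    (Rbar_locally m_infty) (Rbar_locally p_infty).

Definition lam (sigma : R) : R :=
  if Req_EM_T (sigma ^ 2) 1 then / 4
  else / 4 * ln (Rabs ((sigma ^ 2 + 1) / (sigma ^ 2 - 1))).

Definition N_bound (sigma mu : R) : R :=
  if Req_EM_T (sigma ^ 2) 1 then exp (3 / 2) * mu ^ 2 / 2
  else 32 * mu ^ 2 / Rabs (sigma ^ 4 - 1)
       * / (ln (Rabs ((sigma ^ 2 + 1) / (sigma ^ 2 - 1)))) ^ 2.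

(* Completing the square, psi_n(x) rho(x) is a constant multiple of H_n(x) exp(-a x^2 + b x)
   with a = (sigma^2 + 1) / (2 sigma^2) and b = mu / sigma^2.  Integrating by parts against this
   weight turns the recurrence of H_n into beta_(n+2) = s beta_(n+1) + 2 (n+1) r beta_n for the
   integrals beta_n (suitably normalised), with s = b / a and r = 1 / a - 1; the start of the
   recursion is the Gaussian integral, computed by the classical atan trick.  Hence
   alpha_n^2 = C beta_n^2 / (2^n n!), where beta has exponential generating function
   exp(s t + r t^2).  Writing beta_n / n! as the convolution of the Taylor coefficients of
   exp(s t) and exp(r t^2) and applying Cauchy-Schwarz with the binomial weights
   C(n,i) tau^i |r|^(n-i) gives beta_n^2 <= 2^n n! (tau + |r|)^n exp(s^2 / (2 tau)).  For
   n >= N_bound a suitable tau makes this at most 2^n n! exp(-2 lambda n), and the tail of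
   the series of alpha_n^2 is then dominated by a geometric series. *)

From Stdlib Require Import Reals Lra Lia Psatz.
From Coquelicot Require Import Coquelicot.
Open Scope R_scope.

Lemma is_derive_eq (f : R -> R) (x l l' : R) :
  is_derive f x l -> l = l' -> is_derive f x l'.
Proof. intros H <-; exact H. Qed.

Lemma Rle_exp x y : x <= y -> exp x <= exp y.
Proof. intros [H | ->]; [left; apply exp_increasing |]; lra. Qed.

Lemma exp_pow x n : exp x ^ n = exp (x * INR n).
Proof.
  induction n as [| n IH]; [simpl; rewrite Rmult_0_r, exp_0; ring |].
  rewrite S_INR; simpl; rewrite IH, <- exp_plus; f_equal; ring.
Qed.

Lemma pow_le_fact_mul_exp y n : 0 <= y -> y ^ n <= INR (Factorial.fact n) * exp y.
Proof.
  intros Hy.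
  assert (Hfact := INR_fact_lt_0 n).
  assert (Hterm : y ^ n / INR (Factorial.fact n) <= exp y).
  { eapply Rle_trans; [| apply (exp_ge_taylor y n Hy)].
    destruct n as [| n]; [simpl; lra |].
    rewrite tech5; enough (0 <= sum_f_R0 (fun k => y ^ k / INR (Factorial.fact k)) n) by lra.
    apply cond_pos_sum; intro k.
    apply Rmult_le_pos; [apply pow_le; lra | left; apply Rinv_0_lt_compat, INR_fact_lt_0]. }
  apply Rmult_le_compat_l with (r := INR (Factorial.fact n)) in Hterm; [| lra].
  field_simplify in Hterm; lra.
Qed.

Lemma eq_of_is_derive_0 (f : R -> R) :
  (forall x, is_derive f x 0) -> forall x y, f x = f y.
Proof.
  intros Hf x y.
  destruct (Rtotal_order x y) as [H | [-> | H]]; [| reflexivity |].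
  - apply (eq_is_derive f x y); auto.
  - symmetry; apply (eq_is_derive f y x); auto.
Qed.

Lemma is_lim_abs_exp_neg (z : Rbar) :
  z = p_infty \/ z = m_infty -> is_lim (fun x => exp (- Rabs x)) z 0.
Proof.
  intros Hz.
  apply (is_lim_comp exp (fun x => - Rabs x) z 0 m_infty);
    [apply is_lim_exp_m | | apply filter_forall; intros y Hy; discriminate].
  destruct Hz as [-> | ->].
  - apply (is_lim_le_m_loc (fun y => - y)).
    + apply filter_forall; intro y; pose proof (Rle_abs y); lra.
    + apply (is_lim_opp (fun y => y) p_infty p_infty), is_lim_id.
  - apply (is_lim_le_m_loc (fun y => y)); [| apply is_lim_id].
    apply filter_forall; intro y; pose proof (Rle_abs (- y)); rewrite Rabs_Ropp in *; lra.
Qed.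

Lemma is_lim_dominated_abs_exp_neg (f : R -> R) (A : R) (z : Rbar) :
  z = p_infty \/ z = m_infty ->
  (forall x, Rabs (f x) <= A * exp (- Rabs x)) -> is_lim f z 0.
Proof.
  intros Hz Hf.
  assert (Hdom : is_lim (fun x => A * exp (- Rabs x)) z 0).
  { replace (Finite 0) with (Rbar_mult A 0) by (simpl; f_equal; ring).
    apply is_lim_scal_l, is_lim_abs_exp_neg, Hz. }
  apply (is_lim_le_le_loc (fun x => - (A * exp (- Rabs x))) (fun x => A * exp (- Rabs x)));
    [| | exact Hdom].
  - apply filter_forall; intro x; specialize (Hf x); apply Rabs_le_between in Hf; lra.
  - replace (Finite 0) with (Rbar_opp 0) by (simpl; f_equal; ring).
    apply is_lim_opp, Hdom.
Qed.

Lemma Rbar_mult_infty_pos (k : R) (z : Rbar) :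
  0 < k -> z = p_infty \/ z = m_infty -> Rbar_mult k z = z.
Proof.
  intros Hk [-> | ->]; unfold Rbar_mult, Rbar_mult';
    destruct Rle_dec as [H | H]; try destruct Rle_lt_or_eq_dec; try reflexivity; lra.
Qed.

Lemma Series_le_geom (u : nat -> R) (C q : R) :
  0 <= q < 1 -> (forall k, 0 <= u k <= C * q ^ k) -> Series u <= C / (1 - q).
Proof.
  intros Hq Hu.
  assert (Hgeom : is_series (fun k => C * q ^ k) (C / (1 - q))).
  { apply (is_series_scal_l C (fun k => q ^ k)), is_series_geom; rewrite Rabs_right; lra. }
  rewrite <- (is_series_unique _ _ Hgeom).
  apply Series_le; [exact Hu | eexists; exact Hgeom].
Qed.

Lemma Rpower_PI_quarter_sqr : Rpower PI (1 / 4) ^ 2 = sqrt PI.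
Proof.
  assert (HPI := PI_RGT_0).
  simpl; rewrite Rmult_1_r, <- Rpower_plus, <- Rpower_sqrt by exact HPI.
  f_equal; field.
Qed.

(** * Hermite polynomials *)

Lemma hermite_SS n x :
  hermite (S (S n)) x = 2 * x * hermite (S n) x - 2 * INR (S n) * hermite n x.
Proof. reflexivity. Qed.

Lemma hermite_S n x :
  hermite (S n) x = 2 * x * hermite n x - 2 * INR n * hermite (pred n) x.
Proof. destruct n as [| n]; [simpl; unfold hermite; simpl; ring | apply hermite_SS]. Qed.

Lemma is_derive_hermite n x :
  is_derive (hermite n) x (2 * INR n * hermite (pred n) x).
Proof.
  revert x; induction n as [n IH] using (well_founded_induction Wf_nat.lt_wf); intro x.
  destruct n as [| [| n]].
  - apply is_derive_eq with 0; [apply (is_derive_const 1) | simpl; ring].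
  - apply is_derive_eq with 2; [| unfold hermite; simpl; ring].
    apply (is_derive_ext (fun t => 2 * t)); [reflexivity |].
    auto_derive; [exact I | ring].
  - apply (is_derive_ext (fun t => 2 * t * hermite (S n) t - 2 * INR (S n) * hermite n t));
      [intro t; symmetry; apply hermite_SS |].
    eapply is_derive_eq.
    { apply @is_derive_minus.
      - apply (is_derive_mult (fun t => 2 * t) (hermite (S n)));
          [auto_derive; auto | apply IH; lia | intros; apply Rmult_comm].
      - apply is_derive_scal, IH; lia. }
    simpl pred; rewrite (hermite_S n x), !S_INR.
    unfold minus, plus, opp, mult; simpl; ring.
Qed.

Lemma continuous_hermite n x : continuous (hermite n) x.
Proof.
  apply (@ex_derive_continuous R_AbsRing R_NormedModule); eexists; apply is_derive_hermite.
Qed.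

Lemma Rabs_hermite_le n x : Rabs (hermite n x) <= (2 * Rabs x + 2 * INR n) ^ n.
Proof.
  induction n as [n IH] using (well_founded_induction Wf_nat.lt_wf).
  pose proof (Rabs_pos x) as Hx.
  destruct n as [| [| n]].
  - unfold hermite; simpl; rewrite Rabs_R1; lra.
  - unfold hermite; simpl; rewrite Rabs_mult, Rabs_right by lra; lra.
  - set (Y := 2 * Rabs x + 2 * INR (S (S n))).
    assert (HY : 2 <= Y) by (unfold Y; rewrite !S_INR; pose proof (pos_INR n); lra).
    assert (Hmono : forall m, (m < S (S n))%nat -> Rabs (hermite m x) <= Y ^ m).
    { intros m Hm; eapply Rle_trans; [apply IH, Hm |].
      apply pow_incr; split; [pose proof (pos_INR m); lra |].
      unfold Y; apply le_INR in Hm; rewrite S_INR in Hm; lra. }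
    assert (H1 := Hmono (S n) ltac:(lia)); assert (H0 := Hmono n ltac:(lia)).
    rewrite hermite_SS.
    eapply Rle_trans; [apply Rabs_triang |].
    rewrite Rabs_Ropp, !Rabs_mult, (Rabs_right 2), (Rabs_right (INR (S n)))
      by (apply Rle_ge; try apply pos_INR; lra).
    assert (HYn : 0 <= Y ^ n) by (apply pow_le; lra).
    assert (HYx : Y = 2 * Rabs x + 2 * INR (S n) + 2) by (unfold Y; rewrite (S_INR (S n)); ring).
    change (Y ^ S (S n)) with (Y * (Y * Y ^ n)); change (Y ^ S n) with (Y * Y ^ n) in H1.
    pose proof (pos_INR (S n)).
    assert (2 * Rabs x * Rabs (hermite (S n) x) <= 2 * Rabs x * (Y * Y ^ n)) by nra.
    assert (2 * INR (S n) * Rabs (hermite n x) <= 2 * INR (S n) * Y ^ n)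
      by (apply Rmult_le_compat_l; lra).
    assert (Y ^ n <= Y * Y ^ n) by nra.
    nra.
Qed.

Lemma Rabs_hermite_le_exp n x :
  Rabs (hermite n x) <= INR (Factorial.fact n) * exp (2 * INR n) * exp (2 * Rabs x).
Proof.
  eapply Rle_trans; [apply Rabs_hermite_le |].
  rewrite Rmult_assoc, <- exp_plus, (Rplus_comm (2 * INR n)).
  apply pow_le_fact_mul_exp; pose proof (Rabs_pos x); pose proof (pos_INR n); lra.
Qed.

(** * The Gaussian integral *)

Definition gauss_primitive (x : R) : R := RInt (fun t => exp (- t ^ 2)) 0 x.

(* [gauss_aux x + gauss_primitive x ^ 2] has derivative 0 and equals [atan 1] at [0],
   while [gauss_aux] vanishes at infinity. *)
Definition gauss_aux (x : R) : R :=
  RInt (fun t => exp (- (x ^ 2 * (1 + t ^ 2))) / (1 + t ^ 2)) 0 1.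

Lemma continuous_exp_neg_sqr t : continuous (fun t => exp (- t ^ 2)) t.
Proof. apply (@ex_derive_continuous R_AbsRing R_NormedModule); auto_derive; auto. Qed.

Lemma ex_RInt_exp_neg_sqr a b : ex_RInt (fun t => exp (- t ^ 2)) a b.
Proof.
  apply (@ex_RInt_continuous R_CompleteNormedModule); intros; apply continuous_exp_neg_sqr.
Qed.

Lemma is_derive_gauss_primitive x : is_derive gauss_primitive x (exp (- x ^ 2)).
Proof.
  apply (is_derive_RInt (fun t => exp (- t ^ 2)) gauss_primitive 0 x);
    [apply filter_forall; intro b | apply continuous_exp_neg_sqr].
  apply (@RInt_correct R_CompleteNormedModule), ex_RInt_exp_neg_sqr.
Qed.

Lemma gauss_primitive_ge0 x : 0 <= x -> 0 <= gauss_primitive x.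
Proof.
  intros Hx; apply RInt_ge_0; [lra | apply ex_RInt_exp_neg_sqr |].
  intros; left; apply exp_pos.
Qed.

Lemma gauss_primitive_opp x : gauss_primitive (- x) = - gauss_primitive x.
Proof.
  assert (Hd : forall y, is_derive (fun x => gauss_primitive (- x) + gauss_primitive x) y 0).
  { intro y; eapply is_derive_eq.
    { apply (@is_derive_plus R_AbsRing R_NormedModule); [| apply is_derive_gauss_primitive].
      apply (is_derive_comp gauss_primitive (fun x => - x)); [apply is_derive_gauss_primitive |].
      apply (@is_derive_opp R_AbsRing R_NormedModule (fun x => x)), is_derive_id. }
    unfold plus, scal, opp, one; simpl; unfold mult; simpl.
    replace (- y * (- y * 1)) with (y * (y * 1)) by ring; ring. }
  assert (H := eq_of_is_derive_0 _ Hd x 0).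
  unfold gauss_primitive at 3 4 in H; rewrite Ropp_0, RInt_point in H.
  unfold zero in H; simpl in H; lra.
Qed.

Lemma continuity_2d_pt_gauss_aux_integrand_deriv u t :
  continuity_2d_pt (fun u t => - 2 * u * exp (- (u ^ 2 * (1 + t ^ 2)))) u t.
Proof.
  apply continuity_2d_pt_mult.
  - apply continuity_2d_pt_mult; [apply continuity_2d_pt_const | apply continuity_2d_pt_id1].
  - apply (continuity_1d_2d_pt_comp exp (fun u v => - (u ^ 2 * (1 + v ^ 2))));
      [apply derivable_continuous_pt, derivable_pt_exp |].
    apply continuity_2d_pt_opp; simpl.
    repeat first [ apply continuity_2d_pt_mult | apply continuity_2d_pt_plus
                 | apply continuity_2d_pt_id1 | apply continuity_2d_pt_id2
                 | apply continuity_2d_pt_const ].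
Qed.

Lemma RInt_scaled_exp_neg_sqr x :
  RInt (fun t => x * exp (- (x * t) ^ 2)) 0 1 = gauss_primitive x.
Proof.
  assert (Hlin := @RInt_comp_lin R_CompleteNormedModule (fun t => exp (- t ^ 2)) x 0 0 1
                   (ex_RInt_exp_neg_sqr _ _)).
  rewrite Rmult_0_r, Rmult_1_r, !Rplus_0_r in Hlin.
  unfold gauss_primitive; rewrite <- Hlin.
  apply RInt_ext; intros t _; rewrite Rplus_0_r; reflexivity.
Qed.

Lemma is_derive_gauss_aux x :
  is_derive gauss_aux x (- 2 * exp (- x ^ 2) * gauss_primitive x).
Proof.
  set (f u t := exp (- (u ^ 2 * (1 + t ^ 2))) / (1 + t ^ 2)).
  assert (Hpos : forall t, 1 + t ^ 2 <> 0) by (intro t; nra).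
  assert (Hdf : forall u t, Derive (fun u => f u t) u = - 2 * u * exp (- (u ^ 2 * (1 + t ^ 2)))).
  { intros u t; apply is_derive_unique; unfold f.
    auto_derive; [exact I |]; specialize (Hpos t); simpl in *; field; lra. }
  eapply is_derive_eq.
  { apply (is_derive_RInt_param f 0 1 x).
    - apply filter_forall; intros y t _; unfold f; auto_derive; exact I.
    - intros t _; eapply continuity_2d_pt_ext; [intros u v; symmetry; apply Hdf |].
      apply continuity_2d_pt_gauss_aux_integrand_deriv.
    - apply filter_forall; intros y; apply (@ex_RInt_continuous R_CompleteNormedModule).
      intros z _; apply (@ex_derive_continuous R_AbsRing R_NormedModule).
      unfold f; auto_derive; apply Hpos. }
  rewrite <- RInt_scaled_exp_neg_sqr.
  rewrite (RInt_ext _ (fun t => scal (- 2 * exp (- x ^ 2)) (x * exp (- (x * t) ^ 2)))).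
  2:{ intros t _; rewrite Hdf; unfold scal; simpl; unfold mult; simpl.
      replace (- (x * (x * 1) * (1 + t * (t * 1))))
        with (- (x * (x * 1)) + - (x * t * (x * t * 1))) by ring.
      rewrite exp_plus; ring. }
  apply (@RInt_scal R_CompleteNormedModule), (@ex_RInt_continuous R_CompleteNormedModule).
  intros z _; apply (@ex_derive_continuous R_AbsRing R_NormedModule); auto_derive; auto.
Qed.

Lemma gauss_aux_0 : gauss_aux 0 = PI / 4.
Proof.
  unfold gauss_aux.
  rewrite (RInt_ext _ (fun t => / (1 + t ^ 2))).
  2:{ intros t _; replace (- (0 ^ 2 * (1 + t ^ 2))) with 0 by ring.
      rewrite exp_0; apply Rmult_1_l. }
  rewrite (is_RInt_unique _ 0 1 (minus (atan 1) (atan 0))).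
  - rewrite atan_1, atan_0; unfold minus, plus, opp; simpl; ring.
  - apply (@is_RInt_derive R_CompleteNormedModule).
    + intros t _; apply is_derive_Reals, derivable_pt_lim_atan.
    + intros t _; apply (@ex_derive_continuous R_AbsRing R_NormedModule).
      auto_derive; simpl; nra.
Qed.

Lemma gauss_aux_bounds x : 0 <= gauss_aux x <= exp (- x ^ 2).
Proof.
  assert (Hpos : forall t, 0 < 1 + t ^ 2) by (intro t; nra).
  assert (Hex : ex_RInt (fun t => exp (- (x ^ 2 * (1 + t ^ 2))) / (1 + t ^ 2)) 0 1).
  { apply (@ex_RInt_continuous R_CompleteNormedModule); intros z _.
    apply (@ex_derive_continuous R_AbsRing R_NormedModule).
    auto_derive; specialize (Hpos z); simpl in Hpos; lra. }
  split.
  - apply RInt_ge_0; [lra | exact Hex |]; intros t _.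
    apply Rdiv_le_0_compat; [left; apply exp_pos | apply Hpos].
  - replace (exp (- x ^ 2)) with (RInt (fun _ => exp (- x ^ 2)) 0 1)
      by (rewrite RInt_const; unfold scal; simpl; unfold mult; simpl; ring).
    apply RInt_le; [lra | exact Hex | apply ex_RInt_const |]; intros t _.
    specialize (Hpos t).
    assert (exp (- (x ^ 2 * (1 + t ^ 2))) <= exp (- x ^ 2)) by (apply Rle_exp; nra).
    apply Rle_trans with (exp (- (x ^ 2 * (1 + t ^ 2)))); [| assumption].
    unfold Rdiv; rewrite <- (Rmult_1_r (exp _)) at 2.
    apply Rmult_le_compat_l; [left; apply exp_pos |].
    rewrite <- Rinv_1; apply Rinv_le_contravar; nra.
Qed.

Lemma gauss_primitive_sqr x : gauss_primitive x ^ 2 = PI / 4 - gauss_aux x.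
Proof.
  assert (Hd : forall y, is_derive (fun x => gauss_aux x + gauss_primitive x ^ 2) y 0).
  { intro y; eapply is_derive_eq.
    { apply (@is_derive_plus R_AbsRing R_NormedModule); [apply is_derive_gauss_aux |].
      apply (is_derive_pow gauss_primitive 2 y), is_derive_gauss_primitive. }
    unfold plus; simpl; ring. }
  assert (H := eq_of_is_derive_0 _ Hd x 0).
  unfold gauss_primitive at 2 in H; rewrite RInt_point, gauss_aux_0 in H.
  unfold zero in H; simpl in H; lra.
Qed.

Lemma is_lim_gauss_aux : is_lim gauss_aux p_infty 0.
Proof.
  apply (is_lim_dominated_abs_exp_neg _ (exp (/ 4))); [left; reflexivity |].
  intro x; destruct (gauss_aux_bounds x) as [H0 H1].
  rewrite Rabs_right by lra; eapply Rle_trans; [exact H1 |].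
  rewrite <- exp_plus; apply Rle_exp.
  rewrite <- pow2_abs; pose proof (pow2_ge_0 (Rabs x - / 2)); nra.
Qed.

Lemma is_lim_gauss_primitive_p : is_lim gauss_primitive p_infty (sqrt PI / 2).
Proof.
  apply (is_lim_ext_loc (fun x => sqrt (PI / 4 - gauss_aux x))).
  { exists 0; intros x Hx; rewrite <- gauss_primitive_sqr.
    apply sqrt_pow2, gauss_primitive_ge0; lra. }
  replace (sqrt PI / 2) with (sqrt (PI / 4 - 0)).
  2:{ rewrite Rminus_0_r, sqrt_div_alt by lra.
      replace 4 with (2 ^ 2) by ring; rewrite sqrt_pow2 by lra; reflexivity. }
  eapply filterlim_comp; [| apply continuous_sqrt].
  apply (is_lim_minus' _ _ p_infty (PI / 4) 0 (is_lim_const _ _) is_lim_gauss_aux).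
Qed.

Lemma is_lim_gauss_primitive_m : is_lim gauss_primitive m_infty (- (sqrt PI / 2)).
Proof.
  apply (is_lim_ext (fun x => - gauss_primitive (- x)));
    [intro x; rewrite gauss_primitive_opp; ring |].
  apply (is_lim_opp (fun x => gauss_primitive (- x)) m_infty (sqrt PI / 2)).
  apply (is_lim_comp gauss_primitive (fun x => - x) m_infty _ p_infty);
    [apply is_lim_gauss_primitive_p | | apply filter_forall; intros y Hy; discriminate].
  apply (is_lim_opp (fun x => x) m_infty m_infty), is_lim_id.
Qed.

(** * Hermite moments of a Gaussian weight *)

(* The sequence with exponential generating function [exp (s t + r t ^ 2)];
   for instance [hermite n x = gen_hermite (2 * x) (-1) n]. *)
Fixpoint gen_hermite_pair (s r : R) (n : nat) : R * R :=
  match n with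
  | O => (1, s)
  | S m => let p := gen_hermite_pair s r m in
           (snd p, s * snd p + 2 * INR (S m) * r * fst p)
  end.

Definition gen_hermite (s r : R) (n : nat) : R := fst (gen_hermite_pair s r n).

Lemma gen_hermite_0 s r : gen_hermite s r 0 = 1.
Proof. reflexivity. Qed.

Lemma gen_hermite_SS s r n :
  gen_hermite s r (S (S n)) = s * gen_hermite s r (S n) + 2 * INR (S n) * r * gen_hermite s r n.
Proof. reflexivity. Qed.

Lemma gen_hermite_S s r n :
  gen_hermite s r (S n) = s * gen_hermite s r n + 2 * INR n * r * gen_hermite s r (pred n).
Proof. destruct n as [| n]; [simpl; unfold gen_hermite; simpl; ring | apply gen_hermite_SS]. Qed.

Definition gauss_weight (a b x : R) : R := exp (- a * x ^ 2 + b * x).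

Section HermiteGaussWeight.

Variables a b : R.
Hypothesis a_pos : 0 < a.

Lemma is_derive_gauss_weight x :
  is_derive (gauss_weight a b) x ((b - 2 * a * x) * gauss_weight a b x).
Proof. unfold gauss_weight; auto_derive; [exact I | simpl; ring]. Qed.

Lemma continuous_gauss_weight x : continuous (gauss_weight a b) x.
Proof.
  apply (@ex_derive_continuous R_AbsRing R_NormedModule); eexists; apply is_derive_gauss_weight.
Qed.

Lemma gauss_weight_complete_square x :
  gauss_weight a b x = exp (b ^ 2 / (4 * a)) * exp (- (sqrt a * x - b / (2 * sqrt a)) ^ 2).
Proof.
  assert (Hsa : 0 < sqrt a) by (apply sqrt_lt_R0; lra).
  unfold gauss_weight; rewrite <- exp_plus; f_equal.
  assert (Ha2 := pow2_sqrt a (Rlt_le _ _ a_pos)).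
  replace a with (sqrt a ^ 2) at 1 2 by exact Ha2; field; lra.
Qed.

Lemma Rabs_hermite_gauss_weight_le n x :
  Rabs (hermite n x * gauss_weight a b x)
  <= INR (Factorial.fact n) * exp (2 * INR n) * exp ((Rabs b + 3) ^ 2 / (4 * a)) * exp (- Rabs x).
Proof.
  rewrite Rabs_mult, (Rabs_right (gauss_weight a b x)) by (left; apply exp_pos).
  eapply Rle_trans.
  { apply Rmult_le_compat_r; [left; apply exp_pos | apply Rabs_hermite_le_exp]. }
  rewrite !Rmult_assoc; apply Rmult_le_compat_l; [apply pos_INR |].
  apply Rmult_le_compat_l; [left; apply exp_pos |].
  unfold gauss_weight; rewrite <- !exp_plus; apply Rle_exp.
  set (c := Rabs b + 3); set (y := Rabs x).
  assert (Hbx : b * x <= Rabs b * y) by (unfold y; rewrite <- Rabs_mult; apply Rle_abs).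
  assert (Hsq : a * (y - c / (2 * a)) ^ 2 = a * y ^ 2 - c * y + c ^ 2 / (4 * a)) by (field; lra).
  assert (0 <= a * (y - c / (2 * a)) ^ 2) by (apply Rmult_le_pos; [lra | apply pow2_ge_0]).
  unfold y in *; rewrite pow2_abs in Hsq; unfold c in *; lra.
Qed.

Lemma is_lim_hermite_gauss_weight n (z : Rbar) :
  z = p_infty \/ z = m_infty -> is_lim (fun x => hermite n x * gauss_weight a b x) z 0.
Proof.
  intros Hz; eapply is_lim_dominated_abs_exp_neg; [exact Hz |].
  intro x; apply Rabs_hermite_gauss_weight_le.
Qed.

Let c := sqrt PI / (2 * sqrt a) * exp (b ^ 2 / (4 * a)).
Let s := b / a.
Let r := / a - 1.

Definition hermite_weight_primitive (n : nat) (F : R -> R) : Prop :=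
  (forall x, is_derive F x (hermite n x * gauss_weight a b x)) /\
  is_lim F p_infty (c * gen_hermite s r n) /\ is_lim F m_infty (- (c * gen_hermite s r n)).

Lemma hermite_weight_primitive_0 :
  hermite_weight_primitive 0
    (fun x => exp (b ^ 2 / (4 * a)) / sqrt a * gauss_primitive (sqrt a * x - b / (2 * sqrt a))).
Proof.
  assert (Hsa : 0 < sqrt a) by (apply sqrt_lt_R0; lra).
  assert (Hlim : forall (z : Rbar) (l : R), z = p_infty \/ z = m_infty ->
            is_lim gauss_primitive z l ->
            is_lim (fun x => gauss_primitive (sqrt a * x - b / (2 * sqrt a))) z l).
  { intros z l Hz Hl; apply is_lim_comp_lin; [| lra].
    rewrite Rbar_mult_infty_pos by assumption; destruct Hz as [-> | ->]; exact Hl. }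
  unfold hermite_weight_primitive, c; rewrite gen_hermite_0, Rmult_1_r.
  split; [| split].
  - intro x; eapply is_derive_eq.
    { apply is_derive_scal, (is_derive_comp gauss_primitive); [apply is_derive_gauss_primitive |].
      auto_derive; [exact I | reflexivity]. }
    rewrite gauss_weight_complete_square; unfold hermite; simpl.
    unfold scal; simpl; unfold mult; simpl; field; lra.
  - replace (Finite _) with (Rbar_mult (exp (b ^ 2 / (4 * a)) / sqrt a) (sqrt PI / 2))
      by (simpl; f_equal; field; lra).
    apply is_lim_scal_l, Hlim; [left; reflexivity | apply is_lim_gauss_primitive_p].
  - replace (Finite _) with (Rbar_mult (exp (b ^ 2 / (4 * a)) / sqrt a) (- (sqrt PI / 2)))
      by (simpl; f_equal; field; lra).
    apply is_lim_scal_l, Hlim; [right; reflexivity | apply is_lim_gauss_primitive_m].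
Qed.

(* Since [(H_n w)' = (2 n H_(n-1) + (b - 2 a x) H_n) w], this combination differentiates to
   [(2 x H_n - 2 n H_(n-1)) w = H_(n+1) w]. *)
Lemma hermite_weight_primitive_S n F G :
  hermite_weight_primitive n F -> hermite_weight_primitive (pred n) G ->
  hermite_weight_primitive (S n)
    (fun x => s * F x + 2 * INR n * r * G x - / a * (hermite n x * gauss_weight a b x)).
Proof.
  intros [DF [F_p F_m]] [DG [G_p G_m]].
  assert (Hlim : forall (z : Rbar) (l : R), z = p_infty \/ z = m_infty ->
            is_lim F z (l * gen_hermite s r n) -> is_lim G z (l * gen_hermite s r (pred n)) ->
            is_lim (fun x => s * F x + 2 * INR n * r * G x
                             - / a * (hermite n x * gauss_weight a b x))
                   z (l * gen_hermite s r (S n))).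
  { intros z l Hz HF HG.
    replace (l * gen_hermite s r (S n))
      with (s * (l * gen_hermite s r n) + 2 * INR n * r * (l * gen_hermite s r (pred n)) - / a * 0)
      by (rewrite gen_hermite_S; ring).
    apply is_lim_minus'; [apply is_lim_plus' |];
      apply (is_lim_scal_l _ _ z (Finite _)); auto using is_lim_hermite_gauss_weight. }
  split; [| split].
  - intro x; eapply is_derive_eq.
    { apply (@is_derive_minus R_AbsRing R_NormedModule);
        [apply (@is_derive_plus R_AbsRing R_NormedModule) |]; apply is_derive_scal;
        [apply DF | apply DG |].
      apply (is_derive_mult (hermite n) (gauss_weight a b));
        [apply is_derive_hermite | apply is_derive_gauss_weight | intros; apply Rmult_comm]. }
    rewrite hermite_S; unfold s, r, minus, plus, opp, scal, mult; simpl; unfold mult; simpl.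
    field; lra.
  - apply Hlim; auto.
  - replace (- (c * gen_hermite s r (S n))) with ((- c) * gen_hermite s r (S n)) by ring.
    apply Hlim; [right; reflexivity | |];
      rewrite Ropp_mult_distr_l_reverse; assumption.
Qed.

Lemma ex_hermite_weight_primitive n : exists F, hermite_weight_primitive n F.
Proof.
  induction n as [n IH] using (well_founded_induction Wf_nat.lt_wf).
  destruct n as [| n]; [eexists; apply hermite_weight_primitive_0 |].
  destruct (IH n) as [F HF]; [lia |].
  destruct (IH (pred n)) as [G HG]; [lia |].
  eexists; apply hermite_weight_primitive_S; eassumption.
Qed.

End HermiteGaussWeight.

Lemma is_RInt_gen_hermite_gauss_weight (a b : R) (n : nat) : 0 < a ->
  is_RInt_gen (fun x => hermite n x * gauss_weight a b x)
    (Rbar_locally m_infty) (Rbar_locally p_infty)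
    (sqrt PI / sqrt a * exp (b ^ 2 / (4 * a)) * gen_hermite (b / a) (/ a - 1) n).
Proof.
  intros Ha.
  destruct (ex_hermite_weight_primitive a b Ha n) as [F [DF [F_p F_m]]].
  assert (HD : forall x, Derive F x = hermite n x * gauss_weight a b x)
    by (intro; apply is_derive_unique, DF).
  assert (Hsa : 0 < sqrt a) by (apply sqrt_lt_R0; lra).
  set (v := sqrt PI / (2 * sqrt a) * exp (b ^ 2 / (4 * a)) * gen_hermite (b / a) (/ a - 1) n)
    in F_p, F_m.
  replace (sqrt PI / sqrt a * exp (b ^ 2 / (4 * a)) * gen_hermite (b / a) (/ a - 1) n)
    with (v - - v) by (unfold v; field; lra).
  eapply is_RInt_gen_ext; [apply filter_forall; intros ab x _; apply HD |].
  apply is_RInt_gen_Derive; [| | exact F_m | exact F_p].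
  - apply filter_forall; intros ab x _; eexists; apply DF.
  - apply filter_forall; intros ab x _; eapply continuous_ext; [intro y; symmetry; apply HD |].
    apply (@continuous_mult R_UniformSpace R_AbsRing);
      [apply continuous_hermite | apply continuous_gauss_weight; exact Ha].
Qed.

(** * Growth of [gen_hermite] *)

(* Taylor coefficients of [exp (r * t ^ 2)]. *)
Fixpoint exp_sqr_coef (r : R) (i : nat) : R :=
  match i with
  | O => 1
  | S O => 0
  | S (S j as k) => 2 * r * exp_sqr_coef r j / INR (S k)
  end.

Definition gen_hermite_coef (s r : R) (n : nat) : R :=
  sum_f_R0 (fun i => s ^ i / INR (Factorial.fact i) * exp_sqr_coef r (n - i)) n.

Lemma gen_hermite_coef_SS s r n :
  INR (S (S n)) * gen_hermite_coef s r (S (S n))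
  = s * gen_hermite_coef s r (S n) + 2 * r * gen_hermite_coef s r n.
Proof.
  set (T m i := s ^ i / INR (Factorial.fact i) * exp_sqr_coef r (m - i)).
  unfold gen_hermite_coef; fold (T (S (S n))) (T (S n)) (T n).
  rewrite scal_sum.
  rewrite (sum_eq _ (fun i => INR i * T (S (S n)) i + INR (S (S n) - i) * T (S (S n)) i))
    by (intros i Hi; rewrite minus_INR by exact Hi; ring).
  rewrite plus_sum; f_equal.
  - rewrite decomp_sum, scal_sum by lia; simpl pred.
    replace (INR 0 * T (S (S n)) 0%nat) with 0 by (simpl; ring); rewrite Rplus_0_l.
    apply sum_eq; intros i _; unfold T.
    rewrite fact_simpl, mult_INR; simpl pow; replace (S (S n) - S i)%nat with (S n - i)%nat by lia.
    pose proof (INR_fact_lt_0 i); pose proof (lt_0_INR (S i) ltac:(lia)); field; lra.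
  - rewrite !tech5.
    assert (Hlast : INR (S (S n) - S (S n)) * T (S (S n)) (S (S n)) = 0)
      by (rewrite Nat.sub_diag; simpl; ring).
    assert (Hnext : INR (S (S n) - S n) * T (S (S n)) (S n) = 0)
      by (unfold T; replace (S (S n) - S n)%nat with 1%nat by lia; simpl; ring).
    rewrite Hlast, Hnext, !Rplus_0_r, scal_sum.
    apply sum_eq; intros i Hi; unfold T.
    replace (S (S n) - i)%nat with (S (S (n - i))) by lia.
    change (exp_sqr_coef r (S (S (n - i))))
      with (2 * r * exp_sqr_coef r (n - i) / INR (S (S (n - i)))).
    pose proof (lt_0_INR (S (S (n - i))) ltac:(lia)); pose proof (INR_fact_lt_0 i); field; lra.
Qed.

Lemma gen_hermite_eq_coef s r n :
  gen_hermite s r n = INR (Factorial.fact n) * gen_hermite_coef s r n.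
Proof.
  induction n as [n IH] using (well_founded_induction Wf_nat.lt_wf).
  destruct n as [| [| n]]; [unfold gen_hermite, gen_hermite_coef; simpl; field .. |].
  rewrite gen_hermite_SS, (IH (S n)), (IH n) by lia.
  rewrite (fact_simpl (S n)), mult_INR.
  replace (INR (S (S n)) * INR (Factorial.fact (S n)) * gen_hermite_coef s r (S (S n)))
    with (INR (Factorial.fact (S n)) * (INR (S (S n)) * gen_hermite_coef s r (S (S n)))) by ring.
  rewrite gen_hermite_coef_SS, (fact_simpl n), mult_INR; ring.
Qed.

Lemma exp_sqr_coef_sqr_le r i :
  INR (Factorial.fact i) * exp_sqr_coef r i ^ 2 <= 2 ^ i * Rabs r ^ i.
Proof.
  induction i as [i IH] using (well_founded_induction Wf_nat.lt_wf).
  destruct i as [| [| i]]; [simpl; lra | simpl; pose proof (Rabs_pos r); lra |].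
  assert (IHi := IH i ltac:(lia)).
  assert (Hi1 := lt_0_INR (S i) ltac:(lia)); assert (Hi2 := lt_0_INR (S (S i)) ltac:(lia)).
  assert (Hfi := INR_fact_lt_0 i).
  assert (Hratio : INR (S i) / INR (S (S i)) <= 1)
    by (apply (Rmult_le_reg_r (INR (S (S i)))); [lra |]; unfold Rdiv;
        rewrite Rmult_assoc, Rinv_l, (S_INR (S i)) by lra; lra).
  assert (Hrhs : 2 ^ S (S i) * Rabs r ^ S (S i) = 4 * r ^ 2 * (2 ^ i * Rabs r ^ i))
    by (rewrite <- pow2_abs; simpl; ring).
  assert (Hlhs : INR (Factorial.fact (S (S i))) * exp_sqr_coef r (S (S i)) ^ 2
                 = 4 * r ^ 2 * (INR (S i) / INR (S (S i)))
                   * (INR (Factorial.fact i) * exp_sqr_coef r i ^ 2)).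
  { change (exp_sqr_coef r (S (S i))) with (2 * r * exp_sqr_coef r i / INR (S (S i))).
    rewrite (fact_simpl (S i)), (fact_simpl i), !mult_INR; field; lra. }
  rewrite Hlhs, Hrhs.
  assert (0 <= INR (Factorial.fact i) * exp_sqr_coef r i ^ 2)
    by (apply Rmult_le_pos; [lra | apply pow2_ge_0]).
  assert (0 <= INR (S i) / INR (S (S i))) by (apply Rdiv_le_0_compat; lra).
  assert (0 <= 4 * r ^ 2) by (pose proof (pow2_ge_0 r); lra).
  apply Rle_trans with (4 * r ^ 2 * 1 * (INR (Factorial.fact i) * exp_sqr_coef r i ^ 2)).
  - apply Rmult_le_compat_r, Rmult_le_compat_l; assumption.
  - rewrite Rmult_1_r; apply Rmult_le_compat_l; assumption.
Qed.

Lemma Cauchy_Schwarz_sum_f_R0 (z w : nat -> R) n :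
  (forall i, (i <= n)%nat -> 0 < w i) ->
  sum_f_R0 z n ^ 2 <= sum_f_R0 w n * sum_f_R0 (fun i => z i ^ 2 / w i) n.
Proof.
  induction n as [| n IH]; intros Hw.
  - assert (0 < w 0%nat) by (apply Hw; lia); simpl; right; field; lra.
  - rewrite !tech5.
    assert (IHn := IH (fun i Hi => Hw i (le_S _ _ Hi))).
    assert (HW : 0 < sum_f_R0 w n).
    { clear IH IHn; induction n as [| n IHw]; [apply Hw; lia |].
      rewrite tech5; assert (0 < w (S n)) by (apply Hw; lia).
      assert (0 < sum_f_R0 w n) by (apply IHw; intros; apply Hw; lia); lra. }
    assert (Hwn : 0 < w (S n)) by (apply Hw; lia).
    set (Z := sum_f_R0 z n) in *; set (W := sum_f_R0 w n) in *.
    set (Q := sum_f_R0 (fun i => z i ^ 2 / w i) n) in *.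
    set (y := z (S n)) in *; set (v := w (S n)) in *.
    (* the cross term, by AM-GM after scaling by [W v] *)
    assert (Hcross : 2 * Z * y <= W * (y ^ 2 / v) + v * Q).
    { apply Rmult_le_reg_l with (W * v); [nra |].
      replace (W * v * (W * (y ^ 2 / v) + v * Q)) with (W * (W * y ^ 2) + W * v ^ 2 * Q)
        by (field; lra).
      assert (v ^ 2 * Z ^ 2 <= W * v ^ 2 * Q).
      { replace (W * v ^ 2 * Q) with (v ^ 2 * (W * Q)) by ring.
        apply Rmult_le_compat_l; [apply pow2_ge_0 | exact IHn]. }
      pose proof (pow2_ge_0 (W * y - v * Z)); nra. }
    replace ((W + v) * (Q + y ^ 2 / v)) with (W * Q + W * (y ^ 2 / v) + v * Q + y ^ 2)
      by (field; lra).
    nra.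
Qed.

Lemma gen_hermite_term_le s r tau n i : r <> 0 -> 0 < tau -> (i <= n)%nat ->
  (s ^ i / INR (Factorial.fact i) * exp_sqr_coef r (n - i) * INR (Factorial.fact n)) ^ 2
    / (Binomial.C n i * tau ^ i * Rabs r ^ (n - i))
  <= INR (Factorial.fact n) * 2 ^ n * ((s ^ 2 / (2 * tau)) ^ i / INR (Factorial.fact i)).
Proof.
  intros Hr Htau Hi.
  set (k := (n - i)%nat).
  assert (Hn : n = (i + k)%nat) by (unfold k; lia).
  assert (Hrk : 0 < Rabs r ^ k) by (apply pow_lt, Rabs_pos_lt, Hr).
  assert (Hti : 0 < tau ^ i) by (apply pow_lt, Htau).
  assert (Hfk := INR_fact_lt_0 k); assert (Hfi := INR_fact_lt_0 i).
  assert (Hfn := INR_fact_lt_0 n).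
  assert (H2i : 0 < 2 ^ i) by (apply pow_lt; lra).
  assert (Hcoef := exp_sqr_coef_sqr_le r k).
  assert (Hsplit :
    (s ^ i / INR (Factorial.fact i) * exp_sqr_coef r k * INR (Factorial.fact n)) ^ 2
      / (Binomial.C n i * tau ^ i * Rabs r ^ k)
    = INR (Factorial.fact n) * 2 ^ i * ((s ^ 2 / (2 * tau)) ^ i / INR (Factorial.fact i))
      * ((INR (Factorial.fact k) * exp_sqr_coef r k ^ 2) / Rabs r ^ k)).
  { assert (Hpow : (s ^ 2 / (2 * tau)) ^ i = (s ^ i) ^ 2 / (2 ^ i * tau ^ i)).
    { unfold Rdiv; rewrite !Rpow_mult_distr, pow_inv, Rpow_mult_distr, <- !pow_mult, Nat.mul_comm.
      reflexivity. }
    unfold Binomial.C; fold k; rewrite Hpow; field; lra. }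
  assert (Hk : INR (Factorial.fact k) * exp_sqr_coef r k ^ 2 / Rabs r ^ k <= 2 ^ k).
  { apply (Rmult_le_reg_r (Rabs r ^ k)); [lra |].
    unfold Rdiv; rewrite Rmult_assoc, Rinv_l by lra; lra. }
  assert (Hterm : 0 <= (s ^ 2 / (2 * tau)) ^ i / INR (Factorial.fact i)).
  { apply Rdiv_le_0_compat; [| lra].
    apply pow_le, Rdiv_le_0_compat; [apply pow2_ge_0 | lra]. }
  rewrite Hsplit, Hn, pow_add, <- Hn.
  set (T := (s ^ 2 / (2 * tau)) ^ i / INR (Factorial.fact i)) in *.
  replace (INR (Factorial.fact n) * (2 ^ i * 2 ^ k) * T)
    with (INR (Factorial.fact n) * 2 ^ i * T * 2 ^ k) by ring.
  apply Rmult_le_compat_l; [| exact Hk].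
  apply Rmult_le_pos; [apply Rmult_le_pos |]; lra.
Qed.

Lemma gen_hermite_sqr_le s r tau n : r <> 0 -> 0 < tau ->
  gen_hermite s r n ^ 2
  <= 2 ^ n * INR (Factorial.fact n) * (tau + Rabs r) ^ n * exp (s ^ 2 / (2 * tau)).
Proof.
  intros Hr Htau.
  assert (Hra : 0 < Rabs r) by (apply Rabs_pos_lt, Hr).
  rewrite gen_hermite_eq_coef; unfold gen_hermite_coef; rewrite scal_sum.
  eapply Rle_trans.
  { apply (Cauchy_Schwarz_sum_f_R0 _ (fun i => Binomial.C n i * tau ^ i * Rabs r ^ (n - i))).
    intros i _; apply Rmult_lt_0_compat; [apply Rmult_lt_0_compat |]; try (apply pow_lt; lra).
    unfold Binomial.C; apply Rdiv_lt_0_compat; [| apply Rmult_lt_0_compat]; apply INR_fact_lt_0. }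
  rewrite <- binomial.
  assert (Hsum : sum_f_R0 (fun i =>
             (s ^ i / INR (Factorial.fact i) * exp_sqr_coef r (n - i) * INR (Factorial.fact n)) ^ 2
             / (Binomial.C n i * tau ^ i * Rabs r ^ (n - i))) n
           <= INR (Factorial.fact n) * 2 ^ n * exp (s ^ 2 / (2 * tau))).
  { eapply Rle_trans; [apply sum_Rle; intros i Hi; apply gen_hermite_term_le; assumption |].
    rewrite (sum_eq _ (fun i => (s ^ 2 / (2 * tau)) ^ i / INR (Factorial.fact i)
                                * (INR (Factorial.fact n) * 2 ^ n))) by (intros; ring).
    rewrite <- scal_sum; apply Rmult_le_compat_l.
    - apply Rmult_le_pos; [apply pos_INR | apply pow_le; lra].
    - apply exp_ge_taylor, Rdiv_le_0_compat; [apply pow2_ge_0 | lra]. }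
  assert (0 <= (tau + Rabs r) ^ n) by (apply pow_le; lra).
  eapply Rle_trans; [apply Rmult_le_compat_l; eassumption |].
  right; ring.
Qed.

Lemma gen_hermite_sqr_le_geom s r n :
  0 < Rabs r < 1 -> 8 * s ^ 2 <= INR n * Rabs r * ln (Rabs r) ^ 2 ->
  gen_hermite s r n ^ 2 <= 2 ^ n * INR (Factorial.fact n) * exp (ln (Rabs r) / 2) ^ n.
Proof.
  intros Hr Hn.
  set (L := - ln (Rabs r)) in *.
  assert (HL : 0 < L).
  { pose proof (ln_increasing _ _ (proj1 Hr) (proj2 Hr)) as Hln; rewrite ln_1 in Hln.
    unfold L; lra. }
  assert (Hrho : Rabs r = exp (- L)) by (unfold L; rewrite Ropp_involutive, exp_ln; lra).
  (* this [tau] gives [tau + |r| = |r| ^ (3/4)] and, as [exp y >= 1 + y], [tau >= |r| L / 4] *)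
  set (tau := Rabs r * (exp (L / 4) - 1)).
  assert (Htau : Rabs r * (L / 4) <= tau)
    by (apply Rmult_le_compat_l; [lra | pose proof (exp_ineq1_le (L / 4)); lra]).
  assert (Htau0 : 0 < tau) by nra.
  assert (Hr0 : r <> 0) by (intros ->; rewrite Rabs_R0 in Hr; lra).
  eapply Rle_trans; [apply (gen_hermite_sqr_le s r tau n Hr0 Htau0) |].
  assert (Hsum : tau + Rabs r = exp (- (3 * L / 4))).
  { replace (tau + Rabs r) with (Rabs r * exp (L / 4)) by (unfold tau; ring).
    rewrite Hrho, <- exp_plus; f_equal; field. }
  assert (Hexp : s ^ 2 / (2 * tau) <= L / 4 * INR n).
  { apply (Rmult_le_reg_r (2 * tau)); [lra |].
    unfold Rdiv at 1; rewrite Rmult_assoc, Rinv_l, Rmult_1_r by lra.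
    replace (ln (Rabs r) ^ 2) with (L ^ 2) in Hn by (unfold L; ring).
    assert (0 <= L / 4 * INR n * (tau - Rabs r * (L / 4)))
      by (apply Rmult_le_pos; [apply Rmult_le_pos; [lra | apply pos_INR] | lra]).
    nra. }
  rewrite Hsum, !exp_pow, Rmult_assoc, <- exp_plus.
  apply Rmult_le_compat_l; [apply Rmult_le_pos; [apply pow_le; lra | apply pos_INR] |].
  apply Rle_exp; unfold L in *; nra.
Qed.

Lemma gen_hermite_r0 s n : gen_hermite s 0 n = s ^ n.
Proof.
  induction n as [n IH] using (well_founded_induction Wf_nat.lt_wf).
  destruct n as [| n]; [reflexivity |].
  rewrite gen_hermite_S, IH by lia; simpl; ring.
Qed.

Lemma gen_hermite_r0_sqr_le s n :
  exp (3 / 2) * s ^ 2 <= 2 * INR n ->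
  gen_hermite s 0 n ^ 2 <= 2 ^ n * INR (Factorial.fact n) * exp (- (1 / 2)) ^ n.
Proof.
  intros Hn.
  assert (Hs : s ^ 2 <= 2 * INR n * exp (- (3 / 2))).
  { rewrite exp_Ropp; apply (Rmult_le_reg_l (exp (3 / 2))); [apply exp_pos |].
    rewrite (Rmult_comm (2 * INR n)), <- Rmult_assoc, Rinv_r, Rmult_1_l by apply exp_neq_0.
    exact Hn. }
  rewrite gen_hermite_r0, <- pow_mult, Nat.mul_comm, pow_mult.
  eapply Rle_trans; [apply pow_incr; split; [apply pow2_ge_0 | exact Hs] |].
  replace (exp (- (1 / 2)) ^ n) with (exp (INR n) * exp (- (3 / 2)) ^ n)
    by (rewrite !exp_pow, <- exp_plus; f_equal; field).
  rewrite !Rpow_mult_distr.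
  assert (0 <= 2 ^ n * exp (- (3 / 2)) ^ n)
    by (apply Rmult_le_pos; apply pow_le; [lra | left; apply exp_pos]).
  pose proof (pow_le_fact_mul_exp (INR n) n (pos_INR n)).
  replace (2 ^ n * INR (Factorial.fact n) * (exp (INR n) * exp (- (3 / 2)) ^ n))
    with (2 ^ n * exp (- (3 / 2)) ^ n * (INR (Factorial.fact n) * exp (INR n))) by ring.
  replace (2 ^ n * INR n ^ n * exp (- (3 / 2)) ^ n)
    with (2 ^ n * exp (- (3 / 2)) ^ n * INR n ^ n) by ring.
  apply Rmult_le_compat_l; assumption.
Qed.

(** * The coefficients [alpha] *)

Lemma hermite_fun_mul_gauss sigma mu n x : 0 < sigma ->
  hermite_fun n x * gauss sigma mu x
  = / sqrt (sqrt PI * 2 ^ n * INR (Factorial.fact n)) * / sqrt (2 * PI * sigma ^ 2)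
    * exp (- mu ^ 2 / (2 * sigma ^ 2))
    * (hermite n x * gauss_weight ((sigma ^ 2 + 1) / (2 * sigma ^ 2)) (mu / sigma ^ 2) x).
Proof.
  intros Hsigma; assert (0 < sigma ^ 2) by (apply pow_lt; lra).
  assert (Hexp : exp (- x ^ 2 / 2) * exp (- (x - mu) ^ 2 / (2 * sigma ^ 2))
                 = exp (- mu ^ 2 / (2 * sigma ^ 2))
                   * gauss_weight ((sigma ^ 2 + 1) / (2 * sigma ^ 2)) (mu / sigma ^ 2) x)
    by (unfold gauss_weight; rewrite <- !exp_plus; f_equal; field; lra).
  unfold hermite_fun, gauss.
  transitivity (/ sqrt (sqrt PI * 2 ^ n * INR (Factorial.fact n)) * / sqrt (2 * PI * sigma ^ 2)
                * hermite n x * (exp (- x ^ 2 / 2) * exp (- (x - mu) ^ 2 / (2 * sigma ^ 2))));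
    [ring | rewrite Hexp; ring].
Qed.

Lemma alpha_eq sigma mu n : 0 < sigma ->
  alpha sigma mu n
  = / sqrt (sqrt PI * 2 ^ n * INR (Factorial.fact n)) * / sqrt (2 * PI * sigma ^ 2)
    * (sqrt PI / sqrt ((sigma ^ 2 + 1) / (2 * sigma ^ 2)))
    * exp (- mu ^ 2 / (2 * (sigma ^ 2 + 1)))
    * gen_hermite (2 * mu / (sigma ^ 2 + 1)) ((sigma ^ 2 - 1) / (sigma ^ 2 + 1)) n.
Proof.
  intros Hsigma.
  assert (Hs2 : 0 < sigma ^ 2) by (apply pow_lt; lra).
  set (a := (sigma ^ 2 + 1) / (2 * sigma ^ 2)); set (b := mu / sigma ^ 2).
  assert (Ha : 0 < a) by (apply Rdiv_lt_0_compat; lra).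
  set (K := / sqrt (sqrt PI * 2 ^ n * INR (Factorial.fact n)) * / sqrt (2 * PI * sigma ^ 2)
            * exp (- mu ^ 2 / (2 * sigma ^ 2))).
  transitivity (K * (sqrt PI / sqrt a * exp (b ^ 2 / (4 * a)) * gen_hermite (b / a) (/ a - 1) n)).
  - unfold alpha; apply (@is_RInt_gen_unique R_CompleteNormedModule _ _ _ _ _ _).
    eapply is_RInt_gen_ext;
      [| exact (@is_RInt_gen_scal R_NormedModule _ _ _ _ _ K _
                  (is_RInt_gen_hermite_gauss_weight _ _ n Ha))].
    apply filter_forall; intros ab x _; rewrite hermite_fun_mul_gauss by exact Hsigma.
    reflexivity.
  - replace (b / a) with (2 * mu / (sigma ^ 2 + 1)) by (unfold a, b; field; lra).
    replace (/ a - 1) with ((sigma ^ 2 - 1) / (sigma ^ 2 + 1)) by (unfold a; field; lra).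
    replace (- mu ^ 2 / (2 * (sigma ^ 2 + 1)))
      with (- mu ^ 2 / (2 * sigma ^ 2) + b ^ 2 / (4 * a)) by (unfold a, b; field; lra).
    unfold K; rewrite exp_plus; ring.
Qed.

Lemma alpha_sqr sigma mu n : 0 < sigma ->
  alpha sigma mu n ^ 2
  = exp (- mu ^ 2 / (2 * (sigma ^ 2 + 1))) ^ 2 / (sqrt PI * (sigma ^ 2 + 1))
    * (gen_hermite (2 * mu / (sigma ^ 2 + 1)) ((sigma ^ 2 - 1) / (sigma ^ 2 + 1)) n ^ 2
       / (2 ^ n * INR (Factorial.fact n))).
Proof.
  intros Hsigma; rewrite alpha_eq by exact Hsigma.
  assert (Hs2 : 0 < sigma ^ 2) by (apply pow_lt; lra).
  assert (HPI := PI_RGT_0); assert (HsPI : 0 < sqrt PI) by (apply sqrt_lt_R0, HPI).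
  assert (Hf := INR_fact_lt_0 n); assert (H2n : 0 < 2 ^ n) by (apply pow_lt; lra).
  assert (Ha : 0 < (sigma ^ 2 + 1) / (2 * sigma ^ 2)) by (apply Rdiv_lt_0_compat; lra).
  assert (H1 : 0 < sqrt PI * 2 ^ n * INR (Factorial.fact n))
    by (apply Rmult_lt_0_compat; [apply Rmult_lt_0_compat |]; lra).
  assert (H2 : 0 < 2 * PI * sigma ^ 2)
    by (apply Rmult_lt_0_compat; [apply Rmult_lt_0_compat |]; lra).
  set (u := sqrt (sqrt PI * 2 ^ n * INR (Factorial.fact n))).
  set (v := sqrt (2 * PI * sigma ^ 2)); set (w := sqrt ((sigma ^ 2 + 1) / (2 * sigma ^ 2))).
  assert (0 < u) by (apply sqrt_lt_R0, H1); assert (0 < v) by (apply sqrt_lt_R0, H2).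
  assert (0 < w) by (apply sqrt_lt_R0, Ha).
  transitivity (exp (- mu ^ 2 / (2 * (sigma ^ 2 + 1))) ^ 2 * sqrt PI ^ 2
                * gen_hermite (2 * mu / (sigma ^ 2 + 1)) ((sigma ^ 2 - 1) / (sigma ^ 2 + 1)) n ^ 2
                / (u ^ 2 * v ^ 2 * w ^ 2)); [field; lra |].
  unfold u, v, w; rewrite !pow2_sqrt by lra.
  field; lra.
Qed.

Lemma gen_hermite_sqr_le_lam sigma mu n : 0 < sigma -> N_bound sigma mu <= INR n ->
  gen_hermite (2 * mu / (sigma ^ 2 + 1)) ((sigma ^ 2 - 1) / (sigma ^ 2 + 1)) n ^ 2
  <= 2 ^ n * INR (Factorial.fact n) * exp (- 2 * lam sigma) ^ n.
Proof.
  intros Hsigma HN.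
  assert (Hs2 : 0 < sigma ^ 2) by (apply pow_lt; lra).
  unfold N_bound, lam in *; destruct (Req_EM_T (sigma ^ 2) 1) as [E | E].
  - rewrite E in *; replace ((1 - 1) / (1 + 1)) with 0 by field.
    replace (2 * mu / (1 + 1)) with mu by field; replace (-2 * / 4) with (- (1 / 2)) by field.
    apply gen_hermite_r0_sqr_le; lra.
  - set (rho := Rabs ((sigma ^ 2 - 1) / (sigma ^ 2 + 1))).
    assert (Hrho : rho = Rabs (sigma ^ 2 - 1) / (sigma ^ 2 + 1))
      by (unfold rho, Rdiv; rewrite Rabs_mult, Rabs_inv, (Rabs_right (sigma ^ 2 + 1)) by lra;
          reflexivity).
    assert (Hd : 0 < Rabs (sigma ^ 2 - 1) < sigma ^ 2 + 1)
      by (split; [apply Rabs_pos_lt; lra | unfold Rabs; destruct Rcase_abs; lra]).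
    assert (Hrho01 : 0 < rho < 1).
    { rewrite Hrho; split; [apply Rdiv_lt_0_compat; lra |].
      apply (Rmult_lt_reg_r (sigma ^ 2 + 1)); [lra |].
      unfold Rdiv; rewrite Rmult_assoc, Rinv_l by lra; lra. }
    assert (Hln : ln (Rabs ((sigma ^ 2 + 1) / (sigma ^ 2 - 1))) = - ln rho).
    { rewrite <- ln_Rinv by lra; unfold rho; rewrite <- Rabs_inv; do 2 f_equal; field; lra. }
    assert (Hlnrho : ln rho < 0)
      by (rewrite <- ln_1; apply ln_increasing; lra).
    rewrite Hln in *.
    replace (-2 * (/ 4 * - ln rho)) with (ln rho / 2) by field.
    apply gen_hermite_sqr_le_geom; [exact Hrho01 |].
    assert (H4 : Rabs (sigma ^ 4 - 1) = (sigma ^ 2 + 1) ^ 2 * rho).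
    { rewrite Hrho; replace (sigma ^ 4 - 1) with ((sigma ^ 2 + 1) * (sigma ^ 2 - 1)) by ring.
      rewrite Rabs_mult, (Rabs_right (sigma ^ 2 + 1)) by lra; field; lra. }
    rewrite H4 in HN.
    assert (Hsq : 0 < (- ln rho) ^ 2) by (apply pow_lt; lra).
    apply (Rmult_le_compat_r ((- ln rho) ^ 2 * rho)) in HN; [| nra].
    replace (32 * mu ^ 2 / ((sigma ^ 2 + 1) ^ 2 * rho) * / (- ln rho) ^ 2 * ((- ln rho) ^ 2 * rho))
      with (8 * (2 * mu / (sigma ^ 2 + 1)) ^ 2) in HN by (field; lra).
    fold rho; replace (INR n * rho * ln rho ^ 2) with (INR n * ((- ln rho) ^ 2 * rho)) by ring.
    exact HN.
Qed.

Lemma lam_pos sigma : 0 < sigma -> 0 < lam sigma.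
Proof.
  intros Hsigma; assert (Hs2 : 0 < sigma ^ 2) by (apply pow_lt; lra).
  unfold lam; destruct (Req_EM_T (sigma ^ 2) 1) as [E | E]; [lra |].
  apply Rmult_lt_0_compat; [lra |]; rewrite <- ln_1; apply ln_increasing; [lra |].
  unfold Rdiv; rewrite Rabs_mult, Rabs_inv, (Rabs_right (sigma ^ 2 + 1)) by lra.
  assert (Hd : 0 < Rabs (sigma ^ 2 - 1) < sigma ^ 2 + 1)
    by (split; [apply Rabs_pos_lt; lra | unfold Rabs; destruct Rcase_abs; lra]).
  apply (Rmult_lt_reg_r (Rabs (sigma ^ 2 - 1))); [lra |].
  rewrite Rmult_assoc, Rinv_l; lra.
Qed.

Lemma alpha_sqr_le sigma mu n : 0 < sigma -> N_bound sigma mu <= INR n ->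
  alpha sigma mu n ^ 2
  <= exp (- mu ^ 2 / (2 * (sigma ^ 2 + 1))) ^ 2 / (sqrt PI * (sigma ^ 2 + 1))
     * exp (- 2 * lam sigma) ^ n.
Proof.
  intros Hsigma HN; rewrite alpha_sqr by exact Hsigma.
  assert (0 < sigma ^ 2) by (apply pow_lt; lra).
  assert (0 < sqrt PI) by (apply sqrt_lt_R0, PI_RGT_0).
  apply Rmult_le_compat_l.
  - apply Rdiv_le_0_compat; [apply pow2_ge_0 | apply Rmult_lt_0_compat; lra].
  - assert (Hf := INR_fact_lt_0 n); assert (H2n : 0 < 2 ^ n) by (apply pow_lt; lra).
    set (beta := gen_hermite (2 * mu / (sigma ^ 2 + 1)) ((sigma ^ 2 - 1) / (sigma ^ 2 + 1)) n).
    apply (Rmult_le_reg_r (2 ^ n * INR (Factorial.fact n))); [nra |].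
    replace (beta ^ 2 / (2 ^ n * INR (Factorial.fact n)) * (2 ^ n * INR (Factorial.fact n)))
      with (beta ^ 2) by (field; lra).
    rewrite Rmult_comm; apply gen_hermite_sqr_le_lam; assumption.
Qed.

Lemma sqrt_geom_tail_eq sigma mu N : 0 < sigma ->
  sqrt (exp (- mu ^ 2 / (2 * (sigma ^ 2 + 1))) ^ 2 / (sqrt PI * (sigma ^ 2 + 1))
        * exp (- 2 * lam sigma) ^ N / (1 - exp (- 2 * lam sigma)))
  = / (Rpower PI (1 / 4) * sqrt ((sigma ^ 2 + 1) * (1 - exp (- 2 * lam sigma))))
    * exp (- mu ^ 2 / (2 * (sigma ^ 2 + 1)) - lam sigma * INR N).
Proof.
  intros Hsigma.
  assert (Hlam := lam_pos sigma Hsigma).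
  set (q := exp (- 2 * lam sigma)).
  assert (Hq : 0 < q < 1)
    by (split; [apply exp_pos | rewrite <- exp_0; apply exp_increasing; lra]).
  assert (0 < sigma ^ 2) by (apply pow_lt; lra).
  assert (0 < sqrt PI) by (apply sqrt_lt_R0, PI_RGT_0).
  assert (0 < Rpower PI (1 / 4)) by apply exp_pos.
  assert (Hsq := pow2_sqrt ((sigma ^ 2 + 1) * (1 - q)) ltac:(nra)).
  set (t := sqrt ((sigma ^ 2 + 1) * (1 - q))) in *.
  assert (0 < t) by (apply sqrt_lt_R0; nra).
  rewrite <- (sqrt_pow2 (/ (Rpower PI (1 / 4) * t) * _))
    by (apply Rmult_le_pos; [left; apply Rinv_0_lt_compat; nra | left; apply exp_pos]).
  f_equal.
  replace (q ^ N) with (exp (- (lam sigma * INR N)) ^ 2)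
    by (unfold q; rewrite !exp_pow; f_equal; simpl; ring).
  unfold Rminus at 2; rewrite exp_plus.
  transitivity (exp (- mu ^ 2 / (2 * (sigma ^ 2 + 1))) ^ 2 * exp (- (lam sigma * INR N)) ^ 2
                / (Rpower PI (1 / 4) ^ 2 * t ^ 2));
    [rewrite Rpower_PI_quarter_sqr, Hsq; field; lra | field; lra].
Qed.

Theorem lemma4p9 (sigma mu : R) (N : nat) :
  0 < sigma -> (1 <= N)%nat -> N_bound sigma mu <= INR N ->
  sqrt (Series (fun k => (alpha sigma mu (N + k)) ^ 2))
  <= / (Rpower PI (1 / 4) * sqrt ((sigma ^ 2 + 1) * (1 - exp (- 2 * lam sigma))))
     * exp (- mu ^ 2 / (2 * (sigma ^ 2 + 1)) - lam sigma * INR N).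
Proof.
  (* the bound holds for [N = 0] as well *)
  intros Hsigma _ HN.
  rewrite <- sqrt_geom_tail_eq by exact Hsigma.
  apply sqrt_le_1_alt, Series_le_geom.
  - pose proof (lam_pos sigma Hsigma); split; [left; apply exp_pos |].
    rewrite <- exp_0; apply exp_increasing; lra.
  - intro k; split; [apply pow2_ge_0 |].
    rewrite Rmult_assoc, <- pow_add; apply alpha_sqr_le; [exact Hsigma |].
    eapply Rle_trans; [exact HN | apply le_INR; lia].
Qed.
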